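(* Let $f:\mathbb{R}^n\to\mathbb{R}$ be convex and $M$-Lipschitz continuous, $h$ proper closed convex, $\phi=f+h$, $\lambda>0$, $\delta>0$, and $x_0=w_{k-1}\in\mathrm{dom}\, h$. Let $\psi(u)=\phi(u)+\frac1{2\lambda}\|u-x_0\|^2$. For $j\ge1$ let $\Gamma_j:\mathbb{R}^n\to\mathbb{R}$ be convex functions with $\Gamma_j\le f$ (bundle models), let $x_j=\mathrm{argmin}_{u}\{\Gamma_j(u)+h(u)+\frac1{2\lambda}\|u-x_0\|^2\}$, $m_j=\Gamma_j(x_j)+h(x_j)+\frac1{2\lambda}\|x_j-x_0\|^2$, $\tilde x_j\in\mathrm{Argmin}\{\psi(u):u\in\{x_0,x_1,\dots,x_j\}\}$, and $t_j=\psi(\tilde x_j)-m_j$. Suppose $j$ is the first index with $t_j\le\delta$, and set $$w_k=x_j,\quad \tilde w_k=\tilde x_j,\quad u_k=\frac{x_0-x_j}{\lambda},\quad \eta_k=\phi(\tilde x_j)-(\Gamma_j+h)(x_j)+\frac1\lambda\langle x_0-x_j,x_j-\tilde x_j\rangle.$$ Then $u_k\in\partial_{\eta_k}\phi(\tilde w_k)$, $\|\lambda u_k+\tilde w_k-w_{k-1}\|^2+2\lambda\eta_k\le2\lambda\delta$, and $w_k=w_{k-1}-\lambda u_k$; that is, this step of the modern proximal bundle method is an iteration of the HPE framework.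
   Context: $\partial_\varepsilon\phi(x)=\{s:\phi(y)\ge\phi(x)+\langle s,y-x\rangle-\varepsilon\ \forall y\}$. HPE framework (stepsize $\lambda$, tolerance $\delta$): at iteration $k$, find $(\tilde w_k,u_k,\eta_k)$ with $u_k\in\partial_{\eta_k}\phi(\tilde w_k)$ and $\|\lambda u_k+\tilde w_k-w_{k-1}\|^2+2\lambda\eta_k\le2\lambda\delta$, then set $w_k=w_{k-1}-\lambda u_k$. *)

From HB Require Import structures.
From mathcomp Require Import all_boot all_order all_algebra.
From mathcomp Require Import all_classical all_reals all_analysis.
Set Implicit Arguments. Unset Strict Implicit. Unset Printing Implicit Defensive.
Import Order.TTheory GRing.Theory Num.Theory numFieldNormedType.Exports.
Local Open Scope ring_scope.
Local Open Scope ereal_scope.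

Section Defs.
Variables (R : realType) (n : nat).
Local Notation V := 'rV[R]_n.

Definition dot (u v : V) : R := (\sum_(i < n) u ord0 i * v ord0 i)%R.
Definition sqnorm (u : V) : R := dot u u.
Definition enorm (u : V) : R := Num.sqrt (sqnorm u).

Definition convex_fun (f : V -> R) : Prop :=
  forall (x y : V) (t : R), (0 <= t <= 1)%R ->
    (f (t *: x + (1 - t) *: y) <= t * f x + (1 - t) * f y)%R.

Definition lipschitz_with (M : R) (f : V -> R) : Prop :=
  forall x y : V, (`|f x - f y| <= M * enorm (x - y))%R.

(* convexity of an extended-real-valued function (convention 0 * +oo = 0) *)
Definition convex_efun (h : V -> \bar R) : Prop :=
  forall (x y : V) (t : R), (0 <= t <= 1)%R ->
    h (t *: x + (1 - t) *: y)%R <= t%:E * h x + (1 - t)%:E * h y.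

Definition proper_fun (h : V -> \bar R) : Prop :=
  (exists x, h x \is a fin_num) /\ (forall x, h x != -oo).

Definition epigraph (h : V -> \bar R) : set (V * R) :=
  [set p | h p.1 <= p.2%:E].
Definition closed_fun (h : V -> \bar R) : Prop := closed (epigraph h).

Definition dom (h : V -> \bar R) : set V := [set x | h x < +oo].

Definition eps_subdiff (phi : V -> \bar R) (eps : R) (x s : V) : Prop :=
  forall y : V, phi x + (dot s (y - x) - eps)%:E <= phi y.

End Defs.

(* Optimality of x_j in the prox-subproblem makes u = (x_0 - x_j)/lam an exact
   subgradient of Gamma_j + h at x_j; as Gamma_j <= f, the same u is an
   eta-subgradient of phi = f + h at any point x~ where phi is finite, eta being
   the linearisation gap at x~.  Expanding |x~ - x_0|^2 around x_j gives the
   identity |x~ - x_j|^2 + 2 lam eta = 2 lam t_j, and t_j <= delta ends the proof. *)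
From HB Require Import structures.
From mathcomp Require Import all_boot all_order all_algebra.
From mathcomp Require Import all_classical all_reals all_analysis.
From mathcomp Require Import ring lra.
Set Implicit Arguments. Unset Strict Implicit. Unset Printing Implicit Defensive.
Import Order.TTheory GRing.Theory Num.Theory numFieldNormedType.Exports.
Local Open Scope ring_scope.

Section InnerProduct.
Variables (R : realType) (n : nat).
Implicit Types (u v w : 'rV[R]_n).

Lemma dotC u v : dot u v = dot v u.
Proof. by apply: eq_bigr => i _; rewrite mulrC. Qed.

Lemma dotDl u v w : dot (u + v) w = dot u w + dot v w.
Proof. by rewrite /dot -big_split; apply: eq_bigr => i _; rewrite mxE mulrDl. Qed.

Lemma dotZl (a : R) u w : dot (a *: u) w = a * dot u w.
Proof. by rewrite /dot mulr_sumr; apply: eq_bigr => i _; rewrite mxE mulrA. Qed.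

Lemma dotNl u w : dot (- u) w = - dot u w.
Proof. by rewrite -scaleN1r dotZl mulN1r. Qed.

Lemma dotDr u v w : dot w (u + v) = dot w u + dot w v.
Proof. by rewrite dotC dotDl !(dotC w). Qed.

Lemma dotZr (a : R) u w : dot w (a *: u) = a * dot w u.
Proof. by rewrite dotC dotZl dotC. Qed.

Lemma dotNr u w : dot w (- u) = - dot w u.
Proof. by rewrite dotC dotNl dotC. Qed.

Lemma sqnormD u v : sqnorm (u + v) = sqnorm u + 2 * dot u v + sqnorm v.
Proof. by rewrite /sqnorm dotDl !dotDr (dotC v u); ring. Qed.

Lemma sqnormZ (a : R) u : sqnorm (a *: u) = a ^+ 2 * sqnorm u.
Proof. by rewrite /sqnorm dotZl dotZr mulrA expr2. Qed.

Lemma sqnormB_split u v w :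
  sqnorm (u - w) = sqnorm (u - v) + 2 * dot (u - v) (v - w) + sqnorm (v - w).
Proof. by rewrite -sqnormD addrA subrK. Qed.

End InnerProduct.

Lemma affine_ge0_at0 (R : realFieldType) (a b : R) :
  (forall t, 0 < t <= 1 -> 0 <= a + t * b) -> 0 <= a.
Proof.
move=> ge0_ab; rewrite leNgt; apply/negP => a_lt0.
have D_gt0 : 0 < - a + `|b| by rewrite ltr_wpDr ?oppr_gt0.
(* With this t, a + t |b| = t a < 0. *)
pose t := - a / (- a + `|b|).
have tD : t * (- a + `|b|) = - a by rewrite divfK ?gt_eqF.
have t_gt0 : 0 < t by rewrite divr_gt0 ?oppr_gt0.
have t_le1 : t <= 1 by rewrite ler_pdivrMr // mul1r lerDl.
have tb : t * b <= t * `|b| by rewrite ler_pM2l // real_ler_norm ?num_real.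
have ta_lt0 : t * a < 0 by rewrite pmulr_rlt0.
rewrite mulrDr mulrN in tD.
have := ge0_ab t; rewrite t_gt0 t_le1 => /(_ isT).
lra.
Qed.

Lemma fin_numEFinD (R : realDomainType) (r s : R) (e : \bar R) :
  e != -oo%E -> (r%:E + e + s%:E < +oo)%E -> e \is a fin_num.
Proof.
rewrite fin_numE => -> /=; apply: contraTN => /eqP ->.
by rewrite addey // addye // ltxx.
Qed.

Section ProxSubgradient.
Variables (R : realType) (n : nat).
Variables (G : 'rV[R]_n -> R) (h : 'rV[R]_n -> \bar R) (lam : R) (c x : 'rV[R]_n).
Hypotheses (G_conv : convex_fun G) (h_conv : convex_efun h)
  (h_neqNy : forall u, h u != -oo%E) (lam_gt0 : 0 < lam)
  (h_fin : h x \is a fin_num)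
  (x_argmin : forall u, ((G x)%:E + h x + (lam^-1 / 2 * sqnorm (x - c))%:E
                        <= (G u)%:E + h u + (lam^-1 / 2 * sqnorm (u - c))%:E)%E).

(* Compare the subproblem at x and at x + t (y - x); dividing by t and letting
   t -> 0 kills the quadratic term. *)
Lemma prox_argmin_subdiff :
  eps_subdiff (fun u => (G u)%:E + h u)%E 0 x (lam^-1 *: (c - x)).
Proof.
move=> y; rewrite subr0 -(fineK h_fin); set a := fine (h x).
case hyE: (h y) => [b||]; last by have := h_neqNy y; rewrite hyE.
  2: by rewrite addey // leey.
rewrite -!EFinD lee_fin.
set L := lam^-1; set D := dot (x - c) (y - x); set S := sqnorm (y - x).
have -> : dot (L *: (c - x)) (y - x) = - (L * D) by rewrite dotZl -opprB dotNl mulrN.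
have L_gt0 : 0 < L by rewrite invr_gt0.
suff : 0 <= G y + b - G x - a + L * D by lra.
apply: (@affine_ge0_at0 _ _ (L / 2 * S)) => t /andP[t_gt0 t_le1].
rewrite -(pmulr_rge0 _ t_gt0).
set z := t *: y + (1 - t) *: x.
have t01 : 0 <= t <= 1 by rewrite ltW.
have Gz : G z <= t * G y + (1 - t) * G x := G_conv y x t01.
have := h_conv y x t01; rewrite hyE -(fineK h_fin) -/a -!EFinM -EFinD -/z.
case hzE: (h z) => [e||]; last by have := h_neqNy z; rewrite hzE.
  2: by rewrite leNgt ltey.
rewrite lee_fin => hz.
have zc : z - c = x - c + t *: (y - x) by apply/rowP => k; rewrite !mxE; ring.
have := x_argmin z; rewrite hzE -(fineK h_fin) -/a -!EFinD lee_fin zc.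
rewrite (sqnormD (x - c)) sqnormZ dotZr -/D -/S -/L.
nra.
Qed.

End ProxSubgradient.

Lemma eps_subdiff_minorant (R : realType) (n : nat) (psi phi : 'rV[R]_n -> \bar R)
    (eps : R) (x x' s : 'rV[R]_n) (a b : R) :
  (forall u, psi u <= phi u)%E -> psi x = a%:E -> phi x' = b%:E ->
  eps_subdiff psi eps x s ->
  eps_subdiff phi (b - a - dot s (x' - x) + eps) x' s.
Proof.
move=> psi_le_phi psixE phix'E s_sub y; apply: le_trans (psi_le_phi y).
apply: le_trans (s_sub y); rewrite psixE phix'E -!EFinD lee_fin.
have -> : dot s (y - x) = dot s (y - x') + dot s (x' - x).
  by rewrite -dotDr addrA subrK.
lra.
Qed.

Lemma prox_gap_identity (R : realType) (n : nat) (lam p q : R) (c x y : 'rV[R]_n) :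
  lam != 0 ->
  sqnorm (y - x) + 2 * lam * (p - q + lam^-1 * dot (c - x) (x - y)) =
  2 * lam * ((p + lam^-1 / 2 * sqnorm (y - c)) - (q + lam^-1 / 2 * sqnorm (x - c))).
Proof.
move=> lam_neq0; rewrite (sqnormB_split y x c).
rewrite -(opprB x c) -(opprB y x) dotNl dotNr opprK (dotC (y - x)).
by field.
Qed.

Local Open Scope ereal_scope.

Theorem lemma3p1 (R : realType) (n : nat)
  (f : 'rV[R]_n -> R) (M : R) (h : 'rV[R]_n -> \bar R)
  (lam delta : R) (x0 : 'rV[R]_n)
  (Gamma : nat -> 'rV[R]_n -> R) (x xt : nat -> 'rV[R]_n) (j : nat) :
  convex_fun f -> lipschitz_with M f ->
  proper_fun h -> closed_fun h -> convex_efun h ->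
  (0 < lam)%R -> (0 < delta)%R -> dom h x0 ->
  let phi := fun u => (f u)%:E + h u in
  let psi := fun u => phi u + (lam^-1 / 2 * sqnorm (u - x0))%:E in
  let model := fun i u =>
    (Gamma i u)%:E + h u + (lam^-1 / 2 * sqnorm (u - x0))%:E in
  let m := fun i => model i (x i) in
  let t := fun i => psi (xt i) - m i in
  (* bundle models *)
  (forall i, (1 <= i)%N -> convex_fun (Gamma i)) ->
  (forall i u, (1 <= i)%N -> (Gamma i u <= f u)%R) ->
  (* x_0 is the prox center; x_i = argmin of the model subproblem *)
  x 0%N = x0 ->
  (forall i, (1 <= i)%N -> forall u, model i (x i) <= model i u) ->
  (* xt_i in Argmin { psi(u) : u in {x_0, ..., x_i} } *)
  (forall i, (1 <= i)%N ->
     (exists l, (l <= i)%N /\ xt i = x l) /\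
     (forall l, (l <= i)%N -> psi (xt i) <= psi (x l))) ->
  (* j is the first index with t_j <= delta *)
  (1 <= j)%N -> t j <= delta%:E ->
  (forall i, (1 <= i)%N -> (i < j)%N -> delta%:E < t i) ->
  let wk := x j in
  let wtk := xt j in
  let uk := (lam^-1 *: (x0 - x j))%R in
  exists etak : R,
    etak%:E = phi (xt j) - ((Gamma j (x j))%:E + h (x j))
              + (lam^-1 * dot (x0 - x j) (x j - xt j))%:E /\
    eps_subdiff phi etak wtk uk /\
    (sqnorm (lam *: uk + wtk - x0) + 2 * lam * etak <= 2 * lam * delta)%R /\
    wk = (x0 - lam *: uk)%R.
Proof.
move=> f_conv _ [_ h_neqNy] _ h_conv lam_gt0 _ x0_dom phi psi model m t.
move=> Gamma_conv Gamma_le_f x0E x_argmin xt_argmin j_ge1 tj_le _ wk wtk uk.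
have lam_neq0 : lam != 0%R by rewrite gt_eqF.
have fin_x0 : forall r s : R, r%:E + h x0 + s%:E < +oo.
  by move=> r s; rewrite !lte_add_pinfty ?ltry.
have h_xj : h (x j) \is a fin_num.
  have := le_lt_trans (x_argmin j j_ge1 x0) (fin_x0 _ _).
  exact: fin_numEFinD (h_neqNy _).
have h_xtj : h (xt j) \is a fin_num.
  have := (xt_argmin j j_ge1).2 0%N isT; rewrite x0E => /le_lt_trans.
  by move=> /(_ _ (fin_x0 _ _)); exact: fin_numEFinD (h_neqNy _).
set a := fine (h (x j)); set b := fine (h (xt j)).
have haE : h (x j) = a%:E by rewrite fineK.
have hbE : h (xt j) = b%:E by rewrite fineK.
have lamuk : (lam *: uk = x0 - x j)%R by rewrite scalerA mulfV // scale1r.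
pose eta := (f (xt j) + b - (Gamma j (x j) + a) + lam^-1 * dot (x0 - x j) (x j - xt j))%R.
exists eta; split; first by rewrite /eta /phi haE hbE.
split.
  have -> : eta = (f (xt j) + b - (Gamma j (x j) + a) - dot uk (xt j - x j) + 0)%R.
    by rewrite addr0 /uk dotZl -(opprB (x j) (xt j)) dotNr mulrN opprK.
  apply: (eps_subdiff_minorant _ _ _ (prox_argmin_subdiff (Gamma_conv j j_ge1)
    h_conv h_neqNy lam_gt0 h_xj (x_argmin j j_ge1))).
  - by move=> u; apply: leeD2r; rewrite lee_fin Gamma_le_f.
  - by rewrite haE.
  - by rewrite /phi hbE.
split; last by rewrite /wk lamuk subKr.
have -> : (lam *: uk + wtk - x0 = xt j - x j)%R.
  by rewrite lamuk; apply/rowP => k; rewrite !mxE; ring.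
rewrite prox_gap_identity //.
rewrite ler_pM2l ?mulr_gt0 // -lee_fin.
by move: tj_le; rewrite /t /m /psi /model /phi haE hbE -!EFinD.
Qed.
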